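(* Let $V$ be a real vector space, let $F$ be a geometric mean closed (Archimedean) vector lattice, let $u\in F^+$, and let $T\colon V\times V\to F$ be a vector semi-inner product. Define $\|x\|^T_u:=T(x,x)\boxtimes u$ for $x\in V$. Then $\|\cdot\|^T_u\colon V\to F$ is a vector seminorm, i.e. (a) $\|x\|^T_u\in F^+$ for all $x\in V$; (b) $\|\alpha x\|^T_u=|\alpha|\,\|x\|^T_u$ for all $x\in V$ and $\alpha\in\mathbb{R}$; (c) $\|x+y\|^T_u\le \|x\|^T_u+\|y\|^T_u$ for all $x,y\in V$.
   Context: All vector spaces are over $\mathbb{R}$ and all vector lattices are Archimedean. For a vector lattice $F$, $F^+=\{x\in F: x\ge 0\}$. A vector lattice $F$ is geometric mean closed if $\inf\{\theta u+\theta^{-1}v:\theta\in(0,\infty)\}$ exists in $F$ for all $u,v\in F^+$; in that case $u\boxtimes v:=2^{-1}\inf\{\theta u+\theta^{-1}v:\theta\in(0,\infty)\}$ for $u,v\in F^+$. A map $T\colon V\times V\to F$ is a vector semi-inner product if it is bilinear ($T(x+y,z)=T(x,z)+T(y,z)$, $T(x,y+z)=T(x,y)+T(x,z)$, $\lambda T(x,y)=T(\lambda x,y)=T(x,\lambda y)$ for all $x,y,z\in V$, $\lambda\in\mathbb{R}$), symmetric ($T(x,y)=T(y,x)$), and satisfies $T(x,x)\ge 0$ for all $x\in V$. *)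

From HB Require Import structures.
From mathcomp Require Import all_boot all_order all_algebra.
From mathcomp Require Import boolp classical_sets reals.
Set Implicit Arguments. Unset Strict Implicit. Unset Printing Implicit Defensive.
Import Order.TTheory GRing.Theory Num.Theory.
Local Open Scope ring_scope.
Local Open Scope classical_set_scope.

Section VL.
Context {R : realType} {F : lmodType R} (le : F -> F -> Prop).

Definition is_inf (S : set F) (a : F) : Prop :=
  (forall s, S s -> le a s) /\ (forall b, (forall s, S s -> le b s) -> le b a).

Definition is_sup (S : set F) (a : F) : Prop :=
  (forall s, S s -> le s a) /\ (forall b, (forall s, S s -> le s b) -> le a b).

Definition vector_lattice : Prop :=
  [/\ (forall x, le x x) /\
      (forall x y, le x y -> le y x -> x = y) /\
      (forall x y z, le x y -> le y z -> le x z),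
      (forall x y z, le x y -> le (x + z) (y + z)),
      (forall (a : R) x y, 0 <= a -> le x y -> le (a *: x) (a *: y)) &
      (forall x y, exists s, is_sup [set x; y] s)].

Definition archimedean_vl : Prop :=
  forall x y, le 0 x -> (forall n : nat, le (x *+ n) y) -> x = 0.

Definition positive (x : F) : Prop := le 0 x.

Definition gm_set (u v : F) : set F :=
  [set w | exists theta : R, 0 < theta /\ w = theta *: u + theta^-1 *: v].

Definition geometric_mean_closed : Prop :=
  forall u v, positive u -> positive v -> exists a, is_inf (gm_set u v) a.

(* u ⊠ v := 2^-1 inf { theta u + theta^-1 v : theta > 0 } (the infimum, when it
   exists, is unique since le is antisymmetric; 0 is a junk value otherwise) *)
Definition gmean (u v : F) : F := (2%:R)^-1 *: xget 0 [set a | is_inf (gm_set u v) a].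

End VL.

Section SIP.
Context {R : realType} {V F : lmodType R} (le : F -> F -> Prop).

Definition vector_semi_inner_product (T : V -> V -> F) : Prop :=
  [/\ (forall x y z, T (x + y) z = T x z + T y z),
      (forall x y z, T x (y + z) = T x y + T x z),
      (forall (l : R) x y, l *: T x y = T (l *: x) y /\ l *: T x y = T x (l *: y)),
      (forall x y, T x y = T y x) &
      (forall x, le 0 (T x x))].

Definition seminormTu (T : V -> V -> F) (u : F) (x : V) : F := gmean le (T x x) u.

End SIP.

(* The infimum m(w) of { θ w + θ⁻¹ u : θ > 0 } is positive, and m(k² w) = k m(w)
   for k ≥ 0: for k > 0 the reparametrization θ ↦ θ k turns the defining set of
   m(k² w) into k times that of m(w), while for k = 0 the set is { r u : r > 0 },
   whose infimum is 0 by the Archimedean property.  For the triangle inequality,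
   put s = t f / (t + f), so that s⁻¹ = t⁻¹ + f⁻¹ and
     t T(x,x) + f T(y,y) - s T(x+y,x+y) = T(t x - f y, t x - f y) / (t + f) ≥ 0;
   hence s T(x+y,x+y) + s⁻¹ u ≤ (t T(x,x) + t⁻¹ u) + (f T(y,y) + f⁻¹ u), and taking
   infima over t and f gives m(T(x+y,x+y)) ≤ m(T(x,x)) + m(T(y,y)). *)
From mathcomp Require Import all_boot all_order all_algebra.
From mathcomp Require Import classical_sets reals.
From mathcomp Require Import ring.
Import Order.TTheory GRing.Theory Num.Theory.
Local Open Scope ring_scope.
Local Open Scope classical_set_scope.

Set Implicit Arguments.
Unset Strict Implicit.
Unset Printing Implicit Defensive.

Section OrderedVectorSpace.
Variables (R : realType) (F : lmodType R) (le : F -> F -> Prop).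
Hypothesis HF : vector_lattice le.

Lemma vl_refl x : le x x.
Proof. by case: HF => [[refl _] _ _ _]. Qed.

Lemma vl_anti x y : le x y -> le y x -> x = y.
Proof. by case: HF => [[_ [anti _]] _ _ _]; apply: anti. Qed.

Lemma vl_trans y x z : le x y -> le y z -> le x z.
Proof. by case: HF => [[_ [_ trans]] _ _ _]; apply: trans. Qed.

Lemma vl_leD2r z x y : le x y -> le (x + z) (y + z).
Proof. by case: HF => [_ addr _ _]; apply: addr. Qed.

Lemma vl_leZ2l (a : R) x y : 0 <= a -> le x y -> le (a *: x) (a *: y).
Proof. by case: HF => [_ _ scale _]; apply: scale. Qed.

Lemma vl_lerDl x y : le 0 y -> le x (x + y).
Proof. by move=> /(vl_leD2r x); rewrite add0r addrC. Qed.

Lemma vl_leBlDr x y z : le (x - y) z <-> le x (z + y).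
Proof.
split=> [/(vl_leD2r y)|/(vl_leD2r (- y))]; first by rewrite subrK.
by rewrite addrK.
Qed.

Lemma vl_addr_ge0 x y : le 0 x -> le 0 y -> le 0 (x + y).
Proof. by move=> x0 y0; apply: vl_trans x0 (vl_lerDl x y0). Qed.

Lemma vl_scaler_ge0 (a : R) x : 0 <= a -> le 0 x -> le 0 (a *: x).
Proof. by move=> a0 /(vl_leZ2l a0); rewrite scaler0. Qed.

Lemma is_inf_unique S a b : is_inf le S a -> is_inf le S b -> a = b.
Proof. by move=> [la ga] [lb gb]; apply: vl_anti; [apply: gb | apply: ga]. Qed.

Lemma is_infZ (k : R) S a : 0 < k ->
  is_inf le S a -> is_inf le [set k *: s | s in S] (k *: a).
Proof.
move=> k_gt0 [lower greatest]; have k_neq0 : k != 0 by rewrite gt_eqF.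
split=> [_ [s Ss <-]|c lb_c]; first exact: vl_leZ2l (ltW k_gt0) (lower s Ss).
rewrite -(scalerKV k_neq0 c); apply: vl_leZ2l (ltW k_gt0) _.
apply: greatest => s Ss; rewrite -(scalerK k_neq0 s).
by apply: vl_leZ2l; [rewrite invr_ge0 ltW | apply: lb_c; exists s].
Qed.

Lemma le_is_infD G H c a b :
  (forall g h, G g -> H h -> le c (g + h)) ->
  is_inf le G a -> is_inf le H b -> le c (a + b).
Proof.
move=> lb_c [_ greatestG] [_ greatestH].
rewrite addrC; apply/vl_leBlDr; apply: greatestH => h Hh.
apply/vl_leBlDr; rewrite addrC; apply/vl_leBlDr; apply: greatestG => g Gg.
by apply/vl_leBlDr; apply: lb_c.
Qed.

Lemma mem_gm_set (t : R) (w u : F) : 0 < t -> gm_set w u (t *: w + t^-1 *: u).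
Proof. by move=> t_gt0; exists t. Qed.

Lemma gm_set_ge0 w u s : le 0 w -> le 0 u -> gm_set w u s -> le 0 s.
Proof.
move=> w0 u0 [t [t_gt0 ->]].
by apply: vl_addr_ge0; apply: vl_scaler_ge0 => //; rewrite ?invr_ge0 ltW.
Qed.

Lemma gm_setZl (k : R) (w u : F) : 0 < k ->
  gm_set ((k * k) *: w) u = [set k *: s | s in gm_set w u].
Proof.
move=> k_gt0; have k_neq0 : k != 0 by rewrite gt_eqF.
apply/seteqP; split=> s.
- move=> [t [t_gt0 ->]]; exists ((t * k) *: w + (t * k)^-1 *: u).
    by exists (t * k); rewrite mulr_gt0.
  rewrite scalerDr !scalerA; congr (_ *: _ + _ *: _); first by ring.
  by field; rewrite gt_eqF.
- move=> [_ [t [t_gt0 ->]] <-]; exists (t / k); split; first by rewrite divr_gt0.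
  rewrite scalerDr !scalerA; congr (_ *: _ + _ *: _); first by field.
  by field; rewrite k_neq0 gt_eqF.
Qed.

Hypothesis Harch : archimedean_vl le.

Lemma archimedean_eq0 s u : le 0 s -> (forall r : R, 0 < r -> le s (r *: u)) -> s = 0.
Proof.
move=> s0 le_su; apply: (@Harch s u s0) => -[|n].
  by rewrite mulr0n; apply: vl_trans s0 _; rewrite -[u]scale1r; apply: le_su.
have n_gt0 : (0 : R) < n.+1%:R by rewrite ltr0Sn.
have := le_su n.+1%:R^-1; rewrite invr_gt0 => /(_ n_gt0) /(vl_leZ2l (ltW n_gt0)).
by rewrite scalerA mulfV ?gt_eqF // scale1r scaler_nat.
Qed.

Lemma is_inf_gm_set0 u : le 0 u -> is_inf le (gm_set 0 u) 0.
Proof.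
move=> u0; split=> [s|c lb_c]; first exact: gm_set_ge0 (vl_refl 0) u0.
case: HF => [_ _ _ has_sup]; have [s [ub_s least_s]] := has_sup c 0.
suff s_eq0 : s = 0 by rewrite -s_eq0; apply: ub_s; left.
apply: archimedean_eq0 (ub_s 0 _) _ => [|r r_gt0]; first by right.
apply: least_s => _ [->|->]; last exact: vl_scaler_ge0 (ltW r_gt0) u0.
have r_inv_gt0 : 0 < r^-1 by rewrite invr_gt0.
by have := lb_c _ (mem_gm_set 0 u r_inv_gt0); rewrite scaler0 add0r invrK.
Qed.

Lemma is_inf_gm_setZ (k : R) w u m : 0 <= k -> le 0 u ->
  is_inf le (gm_set w u) m -> is_inf le (gm_set ((k * k) *: w) u) (k *: m).
Proof.
rewrite le0r => /orP[/eqP ->|k_gt0] u0 inf_m.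
  by rewrite mul0r !scale0r; apply: is_inf_gm_set0.
by rewrite gm_setZl //; apply: is_infZ.
Qed.

Lemma gmeanE w u m : is_inf le (gm_set w u) m -> gmean le w u = 2^-1 *: m.
Proof.
move=> inf_m; rewrite /gmean; congr (_ *: _).
by apply: is_inf_unique (inf_m); apply: (xgetPex 0); exists m.
Qed.

Hypothesis Hgm : geometric_mean_closed le.

Lemma gmean_ge0 w u : le 0 w -> le 0 u -> le 0 (gmean le w u).
Proof.
move=> w0 u0; have [m inf_m] := Hgm w0 u0.
rewrite (gmeanE inf_m); apply: vl_scaler_ge0; first by rewrite invr_ge0 ler0n.
by apply: inf_m.2 => s; apply: gm_set_ge0.
Qed.

Lemma gmeanZl (k : R) w u : 0 <= k -> le 0 w -> le 0 u ->
  gmean le ((k * k) *: w) u = k *: gmean le w u.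
Proof.
move=> k0 w0 u0; have [m inf_m] := Hgm w0 u0.
by rewrite (gmeanE inf_m) (gmeanE (is_inf_gm_setZ k0 u0 inf_m)) !scalerA mulrC.
Qed.

End OrderedVectorSpace.

Section SemiInnerProduct.
Variables (R : realType) (V F : lmodType R) (le : F -> F -> Prop) (T : V -> V -> F).
Hypothesis HT : vector_semi_inner_product le T.

Lemma sipDl x y z : T (x + y) z = T x z + T y z.
Proof. by case: HT => [addl _ _ _ _]. Qed.

Lemma sipDr x y z : T x (y + z) = T x y + T x z.
Proof. by case: HT => [_ addr _ _ _]. Qed.

Lemma sipZl (a : R) x y : T (a *: x) y = a *: T x y.
Proof. by case: HT => [_ _ scale _ _]; rewrite (scale a x y).1. Qed.

Lemma sipZr (a : R) x y : T x (a *: y) = a *: T x y.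
Proof. by case: HT => [_ _ scale _ _]; rewrite (scale a x y).2. Qed.

Lemma sipC x y : T x y = T y x.
Proof. by case: HT. Qed.

Lemma sip_ge0 x : le 0 (T x x).
Proof. by case: HT. Qed.

Lemma sipZ (a : R) x : T (a *: x) (a *: x) = (a * a) *: T x x.
Proof. by rewrite sipZl sipZr scalerA. Qed.

Lemma sip_lincomb (a b : R) x y :
  T (a *: x + b *: y) (a *: x + b *: y)
  = (a * a) *: T x x + (b * b) *: T y y + (2 * a * b) *: T x y.
Proof.
rewrite sipDl !sipDr !sipZl !sipZr !scalerA (sipC y x).
rewrite [_ *: T x y + _]addrC addrACA -scalerDl.
by congr (_ + _ *: _); ring.
Qed.

Lemma sip_harmonic_identity (t f : R) x y :
  (t * f) *: T (x + y) (x + y) + T (t *: x - f *: y) (t *: x - f *: y)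
  = (t + f) *: (t *: T x x + f *: T y y).
Proof.
have -> : x + y = 1 *: x + 1 *: y by rewrite !scale1r.
rewrite -scaleNr !sip_lincomb !scalerDr !scalerA.
rewrite addrACA (addrACA (_ *: T x x)) -!scalerDl.
have -> : t * f * (2 * 1 * 1) + 2 * t * - f = 0 by ring.
by rewrite scale0r addr0; congr (_ *: _ + _ *: _); ring.
Qed.

Hypothesis HF : vector_lattice le.

Lemma sip_harmonic_le (t f : R) x y : 0 < t -> 0 < f ->
  le ((t * f / (t + f)) *: T (x + y) (x + y)) (t *: T x x + f *: T y y).
Proof.
move=> t_gt0 f_gt0; have tf_gt0 : 0 < t + f by rewrite addr_gt0.
have tf_inv_ge0 : 0 <= (t + f)^-1 by rewrite invr_ge0 ltW.
have := vl_lerDl HF ((t * f) *: T (x + y) (x + y)) (sip_ge0 (t *: x - f *: y)).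
move/(vl_leZ2l HF tf_inv_ge0).
by rewrite sip_harmonic_identity !scalerA mulVf ?gt_eqF // scale1r mulrC.
Qed.

Lemma gm_set_sipD u x y m g h :
  is_inf le (gm_set (T (x + y) (x + y)) u) m ->
  gm_set (T x x) u g -> gm_set (T y y) u h -> le m (g + h).
Proof.
move=> [lower _] [t [t_gt0 ->]] [f [f_gt0 ->]].
have s_gt0 : 0 < t * f / (t + f) by rewrite divr_gt0 ?mulr_gt0 ?addr_gt0.
apply: (vl_trans HF (lower _ (mem_gm_set _ _ s_gt0))).
have -> : (t * f / (t + f))^-1 = t^-1 + f^-1.
  by field; rewrite ?gt_eqF ?addr_gt0.
rewrite scalerDl addrACA; apply: (vl_leD2r HF); exact: sip_harmonic_le.
Qed.

Hypothesis Hgm : geometric_mean_closed le.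

Lemma seminormTu_triangle u x y : le 0 u ->
  le (seminormTu le T u (x + y)) (seminormTu le T u x + seminormTu le T u y).
Proof.
move=> u0; have [a inf_a] := Hgm (sip_ge0 x) u0.
have [b inf_b] := Hgm (sip_ge0 y) u0; have [c inf_c] := Hgm (sip_ge0 (x + y)) u0.
rewrite /seminormTu !(gmeanE HF inf_a, gmeanE HF inf_b, gmeanE HF inf_c) -scalerDr.
apply: (vl_leZ2l HF); first by rewrite invr_ge0 ler0n.
by apply: (le_is_infD HF _ inf_a inf_b) => g h; apply: gm_set_sipD.
Qed.

End SemiInnerProduct.

Theorem theorem3p3 (R : realType) (V F : lmodType R) (le : F -> F -> Prop)
  (HF : vector_lattice le) (Harch : archimedean_vl le)
  (Hgm : geometric_mean_closed le)
  (u : F) (Hu : le 0 u) (T : V -> V -> F) (HT : vector_semi_inner_product le T) :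
  [/\ (forall x : V, le 0 (seminormTu le T u x)),
      (forall (x : V) (a : R), seminormTu le T u (a *: x) = `|a| *: seminormTu le T u x) &
      (forall x y : V, le (seminormTu le T u (x + y))
                          (seminormTu le T u x + seminormTu le T u y))].
Proof.
split=> [x | x a | x y].
- exact: (gmean_ge0 HF Hgm (sip_ge0 HT x) Hu).
- have sqr_norm : a * a = `|a| * `|a| by rewrite -normrM ger0_norm // -expr2 sqr_ge0.
  rewrite /seminormTu (sipZ HT) sqr_norm.
  exact: (gmeanZl HF Harch Hgm (normr_ge0 a) (sip_ge0 HT x) Hu).
- exact: seminormTu_triangle.
Qed.
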